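(* Let $\mathbf{F}$ be a finite field with $q$ elements, $V$ a finite-dimensional $\mathbf{F}$-vector space, $W\subset V$ a subspace of codimension $1$, and $T\colon W\to V$ a linear map (a partial linear map on $V$ with domain $W$). For $j\ge0$ let $e(T,j)=\#\{S\colon V\to V\text{ semi-idempotent} : S|_W=T,\ \mathrm{srk}\,S=j\}$, and for $i,j\ge0$ let $e(T,i,j)=\#\{S\colon V\to V\text{ semi-idempotent}: S|_W=T,\ \operatorname{rank} S=i,\ \mathrm{srk}\,S=j\}$. Then (1) $e(T,\mathrm{srk}\,T)=q^{\mathrm{srk}\,T}\,e(T,\mathrm{srk}\,T+1)$; (2) if $\operatorname{im} T\not\subset W$, then $e(T,\operatorname{rank} T,\mathrm{srk}\,T)=q^{\mathrm{srk}\,T}\,e(T,\operatorname{rank} T,\mathrm{srk}\,T+1)$ and $e(T,\operatorname{rank} T+1,\mathrm{srk}\,T)=q^{\mathrm{srk}\,T}\,e(T,\operatorname{rank} T+1,\mathrm{srk}\,T+1)$.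
   Context: A partial linear map on $V$ is a linear map $T\colon W\to V$ from a subspace $W=\operatorname{dom}T$. The composite of partial linear maps $T,S$ has domain $S^{-1}(\operatorname{dom}T)$ and is $v\mapsto T(S(v))$; $T^0=\mathrm{id}_V$ and $T^j$ is the $j$-fold composite. The stable rank $\mathrm{srk}\,T$ of a partial linear map is $\dim \operatorname{im} T^j$ for $j\gg0$. A linear operator $S\colon V\to V$ is semi-idempotent if $V=X\oplus Y$ with $X,Y$ $S$-stable, $S|_X=\mathrm{id}$, $S|_Y$ nilpotent. *)

(* V = 'rV[F]_n (row vectors), linear operators act on the
   right: v |-> v *m S.  Subspaces are row spaces of square matrices (%MS). *)
From HB Require Import structures.
From mathcomp Require Import all_boot all_order all_algebra.
From mathcomp Require Import boolp.
Set Implicit Arguments. Unset Strict Implicit. Unset Printing Implicit Defensive.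
Import GRing.Theory.
Local Open Scope ring_scope.

Section PartialMaps.
Variables (F : fieldType) (n : nat).

Definition preimmx (M U : 'M[F]_n) : 'M[F]_n := kermx (M *m cokermx U).

(* A partial linear map on V with domain D is represented by (D, A):
   it is v |-> v *m A for v in D (only the action of A on D matters).
   pdom D A j = domain of the j-fold composite T^j (T^0 = id_V). *)
Fixpoint pdom (D A : 'M[F]_n) (j : nat) : 'M[F]_n :=
  match j with
  | 0 => 1%:M
  | j'.+1 => (pdom D A j' :&: preimmx (A ^+ j') D)%MS
  end.

Definition pimg (D A : 'M[F]_n) (j : nat) : 'M[F]_n := pdom D A j *m A ^+ j.

Definition srk_is (D A : 'M[F]_n) (r : nat) : Prop :=
  exists N, forall j, (N <= j)%N -> \rank (pimg D A j) = r.

Definition semi_idempotent (S : 'M[F]_n) : Prop :=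
  exists X Y : 'M[F]_n,
    (X :&: Y == (0 : 'M[F]_n))%MS /\ (X + Y == 1%:M)%MS /\
    stablemx X S /\ stablemx Y S /\
    (forall x : 'rV[F]_n, (x <= X)%MS -> x *m S = x) /\
    (exists k, forall y : 'rV[F]_n, (y <= Y)%MS -> y *m S ^+ k = 0).

Definition extends (W A S : 'M[F]_n) : Prop :=
  forall w : 'rV[F]_n, (w <= W)%MS -> w *m S = w *m A.

End PartialMaps.

Definition e2 (F : finFieldType) (n : nat) (W A : 'M[F]_n) (j : nat) : nat :=
  #|[set S : 'M[F]_n | `[< semi_idempotent S /\ extends W A S /\
                          srk_is 1%:M S j >]]|.

Definition e3 (F : finFieldType) (n : nat) (W A : 'M[F]_n) (i j : nat) : nat :=
  #|[set S : 'M[F]_n | `[< semi_idempotent S /\ extends W A S /\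
                          \rank S = i /\ srk_is 1%:M S j >]]|.

From HB Require Import structures.
From mathcomp Require Import all_boot all_order all_algebra.
From mathcomp Require Import boolp.
From mathcomp Require Import zify.
Set Implicit Arguments. Unset Strict Implicit. Unset Printing Implicit Defensive.
Import GRing.Theory.
Local Open Scope ring_scope.

(* Write D i for the domain of T^i.  As W has codimension one, the chain
   V = D 0 > D 1 = W > D 2 > ... loses one dimension per step until it
   stabilises at Dinf = D k, an A-stable subspace of codimension k.  Pick
   y in D (k-1) outside Dinf and put v0 = y A^(k-1), a vector outside W: V is
   spanned by Dinf and the orbit y, ..., v0, and an extension S of T is
   determined by u = v0 S.  If some extension is semi-idempotent then so is A
   on Dinf, and Dinf = Z (+) Y with Z = Dinf A^J its fixed part, of dimension
   srk T, and Y = Dinf (1 - A).  The extension S is semi-idempotent of stable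
   rank srk T iff u lies in Dinf = Z (+) Y, and of stable rank srk T + 1 iff
   u lies in v0 + Y.  Both conditions, as well as rank S = rank T + [u not in
   im T] when im T is not in W, are invariant under translation of u by Z and
   by v0, whence the factor q^(dim Z). *)

Section Operators.
Variables (F : fieldType) (n : nat).
Implicit Types (D A B U S : 'M[F]_n) (v : 'rV[F]_n).

Lemma sub_preimmx B U v : (v <= preimmx B U)%MS = (v *m B <= U)%MS.
Proof. by rewrite /preimmx sub_kermx mulmxA submxE. Qed.

Lemma sub_pdomP D A j v :
  (v <= pdom D A j)%MS <-> (forall i, (i < j)%N -> (v *m A ^+ i <= D)%MS).
Proof.
elim: j => [|j IH] /=; first by split=> // _; exact: submx1.
rewrite sub_capmx sub_preimmx; split.
  case/andP=> /IH H1 H2 i; rewrite ltnS leq_eqVlt; case/orP=> [/eqP->//|].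
  exact: H1.
move=> H; apply/andP; split; last exact: H.
by apply/IH => i Hi; apply: H; rewrite ltnW.
Qed.

Lemma srk_is_fullP S j :
  srk_is 1%:M S j <-> exists N, forall i, (N <= i)%N -> \rank (S ^+ i) = j.
Proof.
have pimg_full i : \rank (pimg 1%:M S i) = \rank (S ^+ i).
  have dom_full : (pdom 1%:M S i :=: (1%:M : 'M[F]_n))%MS.
    apply/eqmxP/andP; split; first exact: submx1.
    by apply/rV_subP => v _; apply/sub_pdomP => l _; exact: submx1.
  by rewrite /pimg (eqmxMr _ dom_full) mul1mx.
by split; case=> N h; exists N => i hi;
  [rewrite -pimg_full h | rewrite pimg_full h].
Qed.

Lemma mulmx_rV_ext m p (B C : 'M[F]_(m, p)) :
  (forall v : 'rV[F]_m, v *m B = v *m C) -> B = C.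
Proof.
move=> H; apply/row_matrixP => i.
by rewrite -[B]mul1mx -[C]mul1mx !row_mul H.
Qed.

Lemma mulmx_exp_fix m (X : 'M[F]_(m, n)) S :
  X *m S = X -> forall t, X *m S ^+ t = X.
Proof.
move=> h; elim=> [|t IH]; first by rewrite expr0 mulmx1.
by rewrite exprSr -mulmxE mulmxA IH h.
Qed.

Lemma exprD_fix S M : S ^+ M *m S = S ^+ M -> forall t, S ^+ (M + t) = S ^+ M.
Proof. by move=> h t; rewrite exprD -mulmxE mulmx_exp_fix. Qed.

(* The splitting is V = ker (S - 1) (+) ker S^M. *)
Lemma semi_idempotentP S : semi_idempotent S <-> exists M, S ^+ M *m S = S ^+ M.
Proof.
split.
  case=> X [Y [_ [hXY [_ [_ [hX [k hY]]]]]]]; exists k.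
  apply/eqP; rewrite -subr_eq0; apply/eqP; apply: mulmx_rV_ext => v.
  rewrite mulmx0.
  have : (v <= X + Y)%MS by apply: submx_trans (submx1 v) _; case/andP: hXY.
  case/sub_addsmxP=> [[a b]] /= ->.
  have hx (w : 'rV[F]_n) : (w <= X)%MS -> forall i, w *m S ^+ i = w.
    by move=> hw; apply: mulmx_exp_fix (hX w hw).
  rewrite mulmxBr !mulmxDl !mulmxA hx ?submxMl // hX ?submxMl //.
  by rewrite hY ?submxMl // mul0mx subrr.
case=> M hM.
have hM2 : S ^+ M *m S ^+ M = S ^+ M by rewrite mulmxE -exprD exprD_fix.
have comm : S *m S ^+ M = S ^+ M *m S by rewrite !mulmxE -exprS exprSr.
exists (kermx (S - 1%:M)), (kermx (S ^+ M)); split.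
  apply/andP; split; last exact: sub0mx.
  apply/rV_subP => v; rewrite sub_capmx !sub_kermx mulmxBr mulmx1 subr_eq0.
  case/andP=> /eqP h1 /eqP h2; rewrite submx0.
  by rewrite -(mulmx_exp_fix h1 M) h2.
split.
  apply/andP; split; first exact: submx1.
  apply/rV_subP => v _.
  rewrite -[v](subrK (v *m S ^+ M)) addrC; apply: addmx_sub_adds.
    by rewrite sub_kermx mulmxBr mulmx1 -mulmxA hM subrr.
  by rewrite sub_kermx mulmxBl -mulmxA hM2 subrr.
split.
  have c1 : S *m (S - 1%:M) = (S - 1%:M) *m S.
    by rewrite mulmxBr mulmxBl mulmx1 mul1mx.
  by rewrite sub_kermx -mulmxA c1 mulmxA mulmx_ker mul0mx.
split; first by rewrite sub_kermx -mulmxA comm mulmxA mulmx_ker mul0mx.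
split; first by move=> x; rewrite sub_kermx mulmxBr mulmx1 subr_eq0 => /eqP.
by exists M => w; rewrite sub_kermx => /eqP.
Qed.

Lemma mxrank_adds_rV m (B : 'M[F]_(m, n)) v :
  \rank (B + v)%MS = (\rank B + ~~ (v <= B)%MS)%N.
Proof.
case: (boolP (v <= B)%MS) => hv.
  by rewrite addn0; apply/eqmx_rank/eqmxP/addsmx_idPl.
have hlt : (B < B + v)%MS by rewrite ltmxE addsmxSl /= addsmx_sub submx_refl.
have h1 := rank_ltmx hlt.
have h2 : (\rank (B + v) <= \rank B + \rank v)%N := mxrank_adds_leqif B v.
have h3 : (\rank v <= 1)%N by rewrite rank_rV; case: (v != 0).
by rewrite /=; lia.
Qed.

Lemma sub_addmxl m (R : 'M[F]_(m, n)) (z u : 'rV[F]_n) : (z <= R)%MS ->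
  ((z + u)%R <= R)%MS = (u <= R)%MS.
Proof.
move=> hz; apply/idP/idP => h; last exact: addmx_sub hz h.
by rewrite -(addKr z u) addmx_sub // eqmx_opp.
Qed.

Lemma submx_exprD S i t : (S ^+ (i + t) <= S ^+ i)%MS.
Proof. by rewrite addnC exprD -mulmxE submxMl. Qed.

(* The chain S^i + U decreases strictly until it stabilises, so it stabilises
   after at most n - rank U steps, and then it equals U. *)
Lemma exp_sub_codim S U M : (U *m S <= U)%MS -> (S ^+ M <= U)%MS ->
  (S ^+ (n - \rank U) <= U)%MS.
Proof.
move=> hU hM.
have chain_step i :
    (S ^+ i <= S ^+ i.+1 + U)%MS -> (S ^+ i.+1 <= S ^+ i.+2 + U)%MS.
  move=> h; rewrite [S ^+ i.+1]exprSr -mulmxE.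
  apply: submx_trans (submxMr S h) _; rewrite addsmxMr; apply: addsmxS => //.
  by rewrite [S ^+ i.+2]exprSr -mulmxE.
have stab i : (S ^+ i <= S ^+ i.+1 + U)%MS -> (S ^+ i <= U)%MS.
  move=> hi.
  have h1 t : (S ^+ (i + t) <= S ^+ (i + t).+1 + U)%MS.
    by elim: t => [|t IH]; rewrite ?addn0 // addnS; apply: chain_step.
  have h2 t : (S ^+ i <= S ^+ (i + t) + U)%MS.
    elim: t => [|t IH]; first by rewrite addn0 addsmxSl.
    apply: submx_trans IH _; rewrite addsmx_sub addsmxSr andbT addnS.
    exact: h1.
  apply: submx_trans (h2 M) _; rewrite addsmx_sub submx_refl andbT.
  by apply: submx_trans hM; rewrite addnC; apply: submx_exprD.
have drop i : (S ^+ i <= U)%MS || (\rank (S ^+ i + U) + i <= n)%N.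
  elim: i => [|i IH]; first by rewrite addn0 rank_leq_col orbT.
  case/orP: IH => [h|h].
    by rewrite (submx_trans _ h) // -addn1 submx_exprD.
  case: (boolP (S ^+ i <= S ^+ i.+1 + U)%MS) => hs.
    by rewrite (submx_trans _ (stab _ hs)) // -addn1 submx_exprD.
  have hlt : (S ^+ i.+1 + U < S ^+ i + U)%MS.
    rewrite ltmxE addsmxS //=; last by rewrite -addn1 submx_exprD.
    by apply: contra hs => hs; apply: submx_trans hs; apply: addsmxSl.
  by apply/orP; right; have := rank_ltmx hlt; lia.
case/orP: (drop (n - \rank U)%N) => // h.
have hr : (\rank (S ^+ (n - \rank U) + U) <= \rank U)%N.
  by have := rank_leq_col U; move: h; set r := \rank _; lia.
have [_ e] := mxrank_leqif_sup (addsmxSr (S ^+ (n - \rank U)) U).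
have : (S ^+ (n - \rank U) + U <= U)%MS.
  by rewrite -e eqn_leq hr mxrankS ?addsmxSr.
by rewrite addsmx_sub => /andP[].
Qed.

End Operators.

Section Counting.
Variables (F : finFieldType) (n : nat).
Implicit Types (Q : pred 'rV[F]_n).

Lemma card_rV_sub m (X : 'M[F]_(m, n)) :
  #|[set v : 'rV[F]_n | (v <= X)%MS]| = (#|F| ^ \rank X)%N.
Proof.
have -> : [set v : 'rV[F]_n | (v <= X)%MS] =
          [set w *m row_base X | w in [set: 'rV[F]_(\rank X)]].
  apply/setP => v; rewrite inE; apply/idP/imsetP.
    by rewrite -(eq_row_base X) => /submxP [w ->]; exists w; rewrite ?inE.
  by case=> w _ ->; rewrite -(eq_row_base X) submxMl.
rewrite card_imset ?cardsT ?card_mx ?mul1n //.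
have [B hB] := row_freeP (row_base_free X).
by move=> w1 w2 h; rewrite -[w1]mulmx1 -hB mulmxA h -mulmxA hB mulmx1.
Qed.

Lemma card_adds_direct Q (Z Y : 'M[F]_n) :
  (forall t : 'rV[F]_n, (t <= Z)%MS -> (t <= Y)%MS -> t = 0) ->
  (forall z v, (z <= Z)%MS -> Q (z + v) = Q v) ->
  #|[set u : 'rV[F]_n | (u <= Z + Y)%MS && Q u]| =
  (#|F| ^ \rank Z * #|[set v : 'rV[F]_n | (v <= Y)%MS && Q v]|)%N.
Proof.
move=> hZY hQ; rewrite -card_rV_sub -cardsX.
rewrite -(card_in_imset (f := fun p : 'rV[F]_n * 'rV[F]_n => p.1 + p.2)).
  apply: eq_card => u; apply/idP/imsetP.
    rewrite inE => /andP [/sub_addsmxP [[a b] /= ->] hq].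
    exists (a *m Z, b *m Y) => //.
    by rewrite !inE /= !submxMl -(hQ (a *m Z)) ?submxMl.
  case=> [[z v]]; rewrite !inE /= => /andP [hz /andP [hv hq]] ->.
  by rewrite hQ // hq andbT addmx_sub_adds.
move=> [z1 v1] [z2 v2]; rewrite !inE /=.
move=> /andP [hz1 /andP [hv1 _]] /andP [hz2 /andP [hv2 _]] e.
have e2 : z1 - z2 = v2 - v1.
  have : z1 + v1 - z2 - v1 = z2 + v2 - z2 - v1 by rewrite e.
  by rewrite addrAC addrK [z2 + v2]addrC addrK.
have hsub (X : 'M[F]_n) a b : (a <= X)%MS -> (b <= X)%MS -> (a - b <= X)%MS.
  by move=> ha hb; rewrite addmx_sub ?eqmx_opp.
have h0 : z1 - z2 = 0 by apply: hZY; [exact: hsub | rewrite e2; exact: hsub].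
move: e2; rewrite h0 => /esym /eqP; rewrite !subr_eq0 => /eqP ->.
by move/eqP: h0; rewrite subr_eq0 => /eqP ->.
Qed.

Lemma card_translate Q (Y : 'M[F]_n) (w : 'rV[F]_n) :
  (forall v, Q (v + w) = Q v) ->
  #|[set u : 'rV[F]_n | (u - w <= Y)%MS && Q u]| =
  #|[set v : 'rV[F]_n | (v <= Y)%MS && Q v]|.
Proof.
move=> hQ; rewrite -[in RHS](card_imset _ (addIr w)).
apply: eq_card => u; apply/idP/imsetP.
  rewrite inE; case/andP=> h1 h2; exists (u - w); last by rewrite subrK.
  by rewrite inE h1 -hQ subrK h2.
by case=> v; rewrite inE => /andP [h1 h2] ->; rewrite inE addrK h1 hQ.
Qed.

End Counting.

Section Extensions.
Variables (F : finFieldType) (n : nat) (W A : 'M[F]_n).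
Implicit Types (S U : 'M[F]_n) (u v : 'rV[F]_n).
Local Notation D := (pdom W A).

Lemma pdomS i : (D i.+1 <= D i)%MS.
Proof. by rewrite /= capmxSl. Qed.

Lemma pdomS_leq i j : (i <= j)%N -> (D j <= D i)%MS.
Proof.
move=> hij; rewrite -(subnKC hij); elim: (j - i)%N => [|t IH].
  by rewrite addn0.
by rewrite addnS; apply: submx_trans (pdomS _) IH.
Qed.

Lemma pdom_mulA i v : (v <= D i.+1)%MS -> (v *m A <= D i)%MS.
Proof.
move/sub_pdomP => h; apply/sub_pdomP => l hl.
by rewrite -mulmxA mulmxE -exprS h.
Qed.

Lemma pdom_stable_succ i : (D i <= D i.+1)%MS -> (D i.+1 <= D i.+2)%MS.
Proof.
move=> h; apply/rV_subP => v hv; apply/sub_pdomP => -[|l] hl.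
  by move/sub_pdomP: hv; apply.
rewrite exprS -mulmxE mulmxA.
by move/sub_pdomP: (submx_trans (pdom_mulA hv) h); apply.
Qed.

Lemma pdom_stabilizes : exists i, (D i <= D i.+1)%MS.
Proof.
case: (pselect (exists i, (D i <= D i.+1)%MS)) => // hno; exfalso.
have rank_drop i : (\rank (D i) + i <= n)%N.
  elim: i => [|i IH]; first by rewrite addn0 mxrank1.
  have hlt : (D i.+1 < D i)%MS.
    by rewrite ltmxE pdomS /=; apply/negP => h; apply: hno; exists i.
  by have := rank_ltmx hlt; lia.
by have := rank_drop n.+1; lia.
Qed.

Let k := ex_minn pdom_stabilizes.
Local Notation Dinf := (D k).

Lemma pdom_k_stable : (Dinf <= D k.+1)%MS.
Proof. by rewrite /k; case: ex_minnP. Qed.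

Lemma pdom_k_min i : (D i <= D i.+1)%MS -> (k <= i)%N.
Proof. by rewrite /k; case: ex_minnP => m _ h /h. Qed.

Lemma pdom_k_sub j : (k <= j)%N -> (Dinf <= D j)%MS.
Proof.
move=> hj; rewrite -(subnKC hj).
have stable t : (D (k + t) <= D (k + t).+1)%MS.
  elim: t => [|t IH]; first by rewrite addn0 pdom_k_stable.
  by rewrite addnS; apply: pdom_stable_succ.
elim: (j - k)%N => [|t IH]; first by rewrite addn0.
by apply: submx_trans IH _; rewrite addnS.
Qed.

Lemma Dinf_mulA : (Dinf *m A <= Dinf)%MS.
Proof.
apply/rV_subP => v /submxP [a ->]; rewrite mulmxA; apply: pdom_mulA.
exact: submx_trans (submxMl _ _) pdom_k_stable.
Qed.

Lemma Dinf_expA_sub j : (Dinf *m A ^+ j <= Dinf)%MS.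
Proof.
elim: j => [|j IH]; first by rewrite mulmx1.
by rewrite exprSr -mulmxE mulmxA; apply: submx_trans (submxMr A IH) Dinf_mulA.
Qed.

Lemma mxrank_Dinf_expA s : srk_is W A s ->
  exists N, forall j, (N <= j)%N -> \rank (Dinf *m A ^+ j) = s.
Proof.
case=> N hN; exists (maxn N k) => j; rewrite geq_max => /andP [hNj hkj].
rewrite -(hN j hNj) /pimg; apply: eqmx_rank; apply/eqmxP.
by apply: eqmxMr; apply/eqmxP/andP; split; [exact: pdom_k_sub | exact: pdomS_leq].
Qed.

Hypothesis hWr : (\rank W).+1 = n.

Lemma mxrank_pdom_succ i : (\rank (D i) <= (\rank (D i.+1)).+1)%N.
Proof.
rewrite /=; set P := preimmx _ _.
have hP : (n.-1 <= \rank P)%N.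
  have h1 : (\rank (A ^+ i *m cokermx W) <= 1)%N.
    by apply: leq_trans (mxrankM_maxr _ _) _; rewrite mxrank_coker; lia.
  by rewrite /P /preimmx mxrank_ker; move: h1; set r := \rank _; lia.
have := mxrank_sum_cap (D i) P; have := rank_leq_col (D i + P)%MS; lia.
Qed.

Lemma mxrank_pdom_lt i : (i < k)%N -> \rank (D i) = (\rank (D i.+1)).+1.
Proof.
move=> hi.
have hn : ~~ (D i <= D i.+1)%MS by apply/negP => /pdom_k_min; lia.
have hlt : (D i.+1 < D i)%MS by rewrite ltmxE pdomS.
by have := rank_ltmx hlt; have := mxrank_pdom_succ i; lia.
Qed.

Lemma mxrank_pdom_k : (\rank Dinf + k = n)%N.
Proof.
suff rank_pdom i : (i <= k)%N -> (\rank (D i) + i = n)%N by exact: rank_pdom.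
elim: i => [|i IH] hi; first by rewrite addn0 mxrank1.
by have := IH (ltnW hi); rewrite mxrank_pdom_lt //; lia.
Qed.

Lemma k_gt0 : (0 < k)%N.
Proof.
rewrite lt0n; apply/negP => /eqP hk.
have : (\rank (D 1) <= \rank W)%N.
  by apply: mxrankS; apply/rV_subP => v /sub_pdomP /(_ 0%N isT); rewrite mulmx1.
by have := mxrankS pdom_k_stable; rewrite hk /= mxrank1; lia.
Qed.

Lemma Dinf_subW : (Dinf <= W)%MS.
Proof. by apply/rV_subP => v /sub_pdomP /(_ 0%N k_gt0); rewrite mulmx1. Qed.

Lemma pdom_pred_notin :
  exists y : 'rV[F]_n, (y <= D k.-1)%MS /\ ~~ (y <= Dinf)%MS.
Proof.
have : ~~ (D k.-1 <= D k.-1.+1)%MS.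
  by apply/negP => /pdom_k_min; have := k_gt0; lia.
rewrite prednK ?k_gt0 // => /row_subPn [i hi].
by exists (row i (D k.-1)); rewrite row_sub.
Qed.

Lemma extends_mulmx S m (X : 'M[F]_(m, n)) : extends W A S -> (X <= W)%MS ->
  X *m S = X *m A.
Proof.
move=> hS hX; apply: mulmx_rV_ext => v; rewrite !mulmxA; apply: hS.
exact: submx_trans (submxMl v X) hX.
Qed.

Lemma Dinf_expS S j : extends W A S -> Dinf *m S ^+ j = Dinf *m A ^+ j.
Proof.
move=> hS; elim: j => [|j IH]; first by rewrite !expr0.
rewrite !exprSr -!mulmxE !mulmxA IH (extends_mulmx hS) //.
exact: submx_trans (Dinf_expA_sub j) Dinf_subW.
Qed.

Lemma Dinf_expS_sub S m (X : 'M[F]_(m, n)) j : extends W A S ->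
  (X <= Dinf)%MS -> (X *m S ^+ j <= Dinf)%MS.
Proof.
move=> hS /submxP [a ->]; rewrite -mulmxA Dinf_expS //.
exact: submx_trans (submxMl _ _) (Dinf_expA_sub j).
Qed.

Lemma Dinf_mulS S : extends W A S -> (Dinf *m S <= Dinf)%MS.
Proof. by move=> hS; rewrite (extends_mulmx hS Dinf_subW) Dinf_mulA. Qed.

Lemma Dinf_fix_of_semi S : extends W A S -> semi_idempotent S ->
  exists J, Dinf *m A ^+ J *m A = Dinf *m A ^+ J.
Proof.
move=> hS /semi_idempotentP [M hM]; exists M.
rewrite -(extends_mulmx hS); last exact: submx_trans (Dinf_expA_sub M) Dinf_subW.
by rewrite -(Dinf_expS M hS) -mulmxA hM.
Qed.

Section Orbit.
Variable y : 'rV[F]_n.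
Hypotheses (hy : (y <= D k.-1)%MS) (hyDinf : ~~ (y <= Dinf)%MS).
Let v0 := y *m A ^+ k.-1.

Lemma orbit_subW l : (l < k.-1)%N -> (y *m A ^+ l <= W)%MS.
Proof. by move/sub_pdomP: hy; apply. Qed.

Lemma v0_notin_W : ~~ (v0 <= W)%MS.
Proof.
apply: contra hyDinf => h; apply/sub_pdomP => l hl.
have := k_gt0; case: (ltngtP l k.-1) => [h1 _|h1 _|-> _ //].
  exact: orbit_subW.
lia.
Qed.

(* For i < k, D i.+1 has codimension one in D i, and y A^(k-1-i) lies in D i
   but not in D i.+1. *)
Lemma pdom_adds_orbit i : (i < k)%N ->
  (D i <= D i.+1 + y *m A ^+ (k.-1 - i))%MS.
Proof.
move=> hi.
have hyi : (y *m A ^+ (k.-1 - i) <= D i)%MS.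
  apply/sub_pdomP => l hl; rewrite -mulmxA mulmxE -exprD.
  by apply: orbit_subW; lia.
have hn : ~~ (y *m A ^+ (k.-1 - i) <= D i.+1)%MS.
  apply: contra v0_notin_W => /sub_pdomP /(_ i (ltnSn i)).
  by rewrite -mulmxA mulmxE -exprD subnK //; lia.
have hsub : (D i.+1 + y *m A ^+ (k.-1 - i) <= D i)%MS.
  by rewrite addsmx_sub pdomS hyi.
have [_ <-] := mxrank_leqif_sup hsub.
by rewrite mxrank_adds_rV hn (mxrank_pdom_lt hi) addn1.
Qed.

Lemma orbit_expS S l : extends W A S -> (l <= k.-1)%N ->
  y *m S ^+ l = y *m A ^+ l.
Proof.
move=> hS; elim: l => [|l IH] hl; first by rewrite !expr0.
rewrite !exprSr -!mulmxE !mulmxA IH ?(ltnW hl) // hS //.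
exact: orbit_subW.
Qed.

Lemma orbit_expS_k S : extends W A S -> y *m S ^+ k = v0 *m S.
Proof.
by move=> hS; rewrite -(prednK k_gt0) exprSr -mulmxE mulmxA orbit_expS.
Qed.

(* V = D 0 is spanned by Dinf and the orbit y, y S, ..., y S^(k-1). *)
Lemma exp_sub_of_orbit S U t : extends W A S -> (Dinf <= U)%MS ->
  (U *m S <= U)%MS ->
  (forall l, (l < k)%N -> (y *m S ^+ (l + t) <= U)%MS) -> (S ^+ t <= U)%MS.
Proof.
move=> hS hDU hUS hyU.
have pdom_expS m : (m <= k)%N -> forall v, (v <= D (k - m))%MS ->
    (v *m S ^+ t <= U)%MS.
  elim: m => [|m IH] hm v hv.
    by apply: submx_trans hDU; apply: Dinf_expS_sub; rewrite subn0 in hv.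
  have := pdom_adds_orbit (_ : k - m.+1 < k)%N.
  rewrite (_ : (k - m.+1).+1 = k - m)%N; last by lia.
  rewrite (_ : (k.-1 - (k - m.+1) = m)%N); last by lia.
  move=> hd; have [|[a b] /= ->] := sub_addsmxP (submx_trans hv (hd _)).
    by lia.
  rewrite mulmxDl; apply: addmx_sub; first by apply: IH; [lia | apply: submxMl].
  rewrite -!mulmxA; apply: submx_trans (submxMl _ _) _.
  rewrite mulmxA -(orbit_expS hS (_ : m <= k.-1)%N); last by lia.
  by rewrite -mulmxA mulmxE -exprD; apply: hyU; lia.
rewrite -[S ^+ t]mul1mx; apply/row_subP => i; rewrite row_mul.
by apply: (pdom_expS k (leqnn k)); rewrite subnn submx1.
Qed.

Lemma v0_in_imW : ~~ (W *m A <= W)%MS -> (v0 <= W *m A)%MS.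
Proof.
move=> hWA; have hk : (1 < k)%N.
  rewrite ltn_neqAle k_gt0 andbT; apply: contra hWA => /eqP hk.
  have hW2 : (W <= D 2)%MS.
    have := pdom_k_stable; rewrite -hk; apply: submx_trans.
    apply/rV_subP => v hv; apply/sub_pdomP => l.
    by rewrite ltnS leqn0 => /eqP ->; rewrite mulmx1.
  apply/rV_subP => v /submxP [a ->]; rewrite mulmxA.
  move/sub_pdomP: (submx_trans (submxMl a W) hW2) => /(_ 1%N isT).
  by rewrite expr1.
rewrite /v0 -(prednK (_ : 0 < k.-1)%N); last by lia.
by rewrite exprSr -mulmxE mulmxA submxMr // orbit_subW //; lia.
Qed.

Lemma functional_v0 : exists c : 'cV[F]_n, W *m c = 0 /\ v0 *m c = 1%:M.
Proof.
set r := v0 *m cokermx W.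
have hr : r != 0 by have := v0_notin_W; rewrite submxE.
have [j hj] : exists j, r 0 j != 0.
  apply/existsP; apply: contraR hr => /existsPn h; apply/eqP/matrixP => a b.
  by rewrite ord1; move: (h b); rewrite negbK => /eqP ->; rewrite mxE.
exists ((r 0 j)^-1 *: (cokermx W *m delta_mx j 0)); split.
  by rewrite -scalemxAr mulmxA mulmx_coker mul0mx scaler0.
rewrite -scalemxAr mulmxA -/r -colE; clearbody r; apply/matrixP => a b.
by rewrite !ord1 !mxE /= mulVf.
Qed.

Section Functional.
Variable c : 'cV[F]_n.
Hypotheses (hWc : W *m c = 0) (hv0c : v0 *m c = 1%:M).

Definition extension u : 'M[F]_n := A + c *m (u - v0 *m A).

Lemma mulmx_kerc m (X : 'M[F]_(m, n)) : (X <= W)%MS -> X *m c = 0.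
Proof. by case/submxP=> a ->; rewrite -mulmxA hWc mulmx0. Qed.

Lemma notin_W_of_functional u : u *m c = 1%:M -> ~~ (u <= W)%MS.
Proof.
move=> hu; apply/negP => /mulmx_kerc; rewrite hu => /matrixP /(_ 0 0).
by rewrite !mxE /= => /eqP; rewrite oner_eq0.
Qed.

Lemma extension_extends u : extends W A (extension u).
Proof.
by move=> w hw; rewrite /extension mulmxDr mulmxA mulmx_kerc // mul0mx addr0.
Qed.

Lemma v0_extension u : v0 *m extension u = u.
Proof. by rewrite /extension mulmxDr mulmxA hv0c mul1mx addrC subrK. Qed.

Lemma W_adds_v0_full : (1%:M <= W + v0)%MS.
Proof.
apply: submx_full; rewrite /row_full mxrank_adds_rV.
by rewrite (notin_W_of_functional hv0c) addn1 hWr.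
Qed.

Lemma extension_v0 S : extends W A S -> S = extension (v0 *m S).
Proof.
move=> hS; apply/eqP; rewrite -subr_eq0; apply/eqP.
have hW : W *m (S - extension (v0 *m S)) = 0.
  rewrite mulmxBr (extends_mulmx hS (submx_refl W)).
  by rewrite (extends_mulmx (extension_extends _) (submx_refl W)) subrr.
have hv0 : v0 *m (S - extension (v0 *m S)) = 0.
  by rewrite mulmxBr v0_extension subrr.
have [[a b] /= e] := sub_addsmxP W_adds_v0_full.
rewrite -[_ - _]mul1mx e mulmxDl -[a *m W *m _]mulmxA -[b *m v0 *m _]mulmxA.
by rewrite hW hv0 !mulmx0 addr0.
Qed.

Lemma extension_inj : injective extension.
Proof. by move=> u1 u2 h; rewrite -(v0_extension u1) h v0_extension. Qed.

Lemma extension_space u : (extension u :=: W *m A + u)%MS.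
Proof.
apply/eqmxP/andP; split.
  have [[a b] /= e] := sub_addsmxP W_adds_v0_full.
  rewrite -[extension u]mul1mx e mulmxDl -[a *m W *m _]mulmxA.
  rewrite -[b *m v0 *m _]mulmxA v0_extension.
  rewrite (extends_mulmx (extension_extends u)) //.
  by apply: addmx_sub_adds; apply: submxMl.
rewrite addsmx_sub -(extends_mulmx (extension_extends u)) // submxMl /=.
by rewrite -{1}(v0_extension u) submxMl.
Qed.

Lemma mxrank_extension u :
  \rank (extension u) = (\rank (W *m A) + ~~ (u <= W *m A)%MS)%N.
Proof. by rewrite extension_space mxrank_adds_rV. Qed.

Lemma card_extensions (PP : 'M[F]_n -> Prop) (P : pred 'M[F]_n) :
  #|[set S | `[< semi_idempotent S /\ extends W A S /\ PP S >] && P S]| =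
  #|[set u | `[< semi_idempotent (extension u) /\ PP (extension u) >]
             && P (extension u)]|.
Proof.
rewrite -[in RHS](card_imset _ extension_inj); apply: eq_card => S.
apply/idP/imsetP.
  rewrite inE => /andP [/asboolP [hsemi [hS hP]] hPS].
  exists (v0 *m S); last exact: extension_v0.
  by rewrite inE -extension_v0 // hPS andbT; apply/asboolP.
case=> u; rewrite inE => /andP [/asboolP [hsemi hP] hPS] ->.
rewrite inE hPS andbT; apply/asboolP.
by do !split => //; exact: extension_extends.
Qed.

Section FixedPart.
Variables (J s : nat).
Hypotheses (hJ : Dinf *m A ^+ J *m A = Dinf *m A ^+ J)
  (hJs : \rank (Dinf *m A ^+ J) = s).
Let Z := Dinf *m A ^+ J.
Let Y := Dinf *m (1%:M - A).

Lemma Dinf_expA_fix t : Dinf *m A ^+ (J + t) = Z.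
Proof. by rewrite exprD -mulmxE mulmxA (mulmx_exp_fix hJ). Qed.

Lemma Dinf_expS_eq S t : extends W A S -> (J <= t)%N -> Dinf *m S ^+ t = Z.
Proof. by move=> hS ht; rewrite Dinf_expS // -(subnKC ht) Dinf_expA_fix. Qed.

Lemma Dinf_expS_subZ S m (X : 'M[F]_(m, n)) t : extends W A S -> (J <= t)%N ->
  (X <= Dinf)%MS -> (X *m S ^+ t <= Z)%MS.
Proof.
by move=> hS ht /submxP [a ->]; rewrite -mulmxA Dinf_expS_eq // submxMl.
Qed.

Lemma Z_mulS S : extends W A S -> Z *m S = Z.
Proof.
move=> hS; rewrite (extends_mulmx hS) ?hJ //.
exact: submx_trans (Dinf_expA_sub J) Dinf_subW.
Qed.

Lemma v0S_in_Dinf S : extends W A S -> srk_is 1%:M S s ->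
  (v0 *m S <= Dinf)%MS.
Proof.
move=> hS /srk_is_fullP [N hN].
have hZ : (Z <= S ^+ (N + J))%MS.
  by rewrite -(Dinf_expS_eq hS (leq_addl N J)) submxMl.
have hSZ : (S ^+ (N + J) <= Z)%MS.
  by have [_ <-] := mxrank_leqif_sup hZ; rewrite hJs hN ?leq_addr.
have := exp_sub_codim (Dinf_mulS hS) (submx_trans hSZ (Dinf_expA_sub J)).
rewrite (_ : (n - \rank Dinf = k)%N); last by have := mxrank_pdom_k; lia.
by rewrite -orbit_expS_k //; apply: submx_trans (submxMl _ _).
Qed.

Lemma semi_srk_of_v0S_in_Dinf S : extends W A S -> (v0 *m S <= Dinf)%MS ->
  semi_idempotent S /\ srk_is 1%:M S s.
Proof.
move=> hS hv0.
have hk : (S ^+ k <= Dinf)%MS.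
  apply: (exp_sub_of_orbit hS (submx_refl _) (Dinf_mulS hS)) => l _.
  by rewrite addnC exprD -mulmxE mulmxA orbit_expS_k // Dinf_expS_sub.
have hkt t : (J <= t)%N -> (S ^+ (k + t) <= Z)%MS.
  by move=> ht; rewrite exprD -mulmxE Dinf_expS_subZ.
split.
  apply/semi_idempotentP; exists (k + J)%N.
  by have /submxP [a ->] := hkt J (leqnn J); rewrite -mulmxA Z_mulS.
apply/srk_is_fullP; exists (k + J)%N => t ht.
rewrite -hJs; apply/eqmx_rank/andP; split.
  by rewrite -(subnKC (_ : k <= t)%N) ?hkt //; lia.
by rewrite -/Z -(Dinf_expS_eq hS (_ : J <= t)%N) ?submxMl //; lia.
Qed.

Lemma semi_srk_iff S : extends W A S ->
  (semi_idempotent S /\ srk_is 1%:M S s) <-> (v0 *m S <= Dinf)%MS.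
Proof.
move=> hS; split; last exact: semi_srk_of_v0S_in_Dinf.
by case=> _; exact: v0S_in_Dinf.
Qed.

(* A limit S^M (S^M S = S^M) of rank s + 1 is not contained in Dinf, so the
   S-stable space Dinf + S^M has codimension < k and contains S^(k-1), hence
   v0. *)
Lemma v0S_sub_v0_in_Y S : extends W A S -> semi_idempotent S ->
  srk_is 1%:M S s.+1 -> (v0 *m S - v0 <= Y)%MS.
Proof.
move=> hS /semi_idempotentP [M hM] /srk_is_fullP [N hN].
set X := S ^+ (M + (N + J)).
have hXS : X *m S = X by rewrite /X exprD_fix.
have hXDinf : ~~ (X <= Dinf)%MS.
  apply/negP => /(Dinf_expS_subZ hS (leqnn J)); rewrite mulmx_exp_fix //.
  by move/mxrankS; rewrite hJs hN //; lia.
set U := (Dinf + X)%MS.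
have hUS : (U *m S <= U)%MS by rewrite addsmxMr addsmxS ?Dinf_mulS ?hXS.
have hrU : (\rank Dinf < \rank U)%N.
  apply: rank_ltmx; rewrite ltmxE addsmxSl /=.
  by apply: contra hXDinf; apply: submx_trans (addsmxSr _ _).
have hv0 : (v0 <= U)%MS.
  rewrite /v0 -(orbit_expS hS (leqnn _)); apply: submx_trans (submxMl _ _) _.
  apply: submx_trans (exp_sub_codim hUS (addsmxSr Dinf X)).
  rewrite -(subnKC (_ : n - \rank U <= k.-1)%N) ?submx_exprD //.
  by have := mxrank_pdom_k; have := rank_leq_col U; lia.
have [[a b] /= ->] := sub_addsmxP hv0.
rewrite mulmxDl -!mulmxA hXS (extends_mulmx hS Dinf_subW).
rewrite [a *m Dinf + _]addrC opprD addrA addrK.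
apply/submxP; exists (- a).
by rewrite /Y mulNmx mulmxBr mulmx1 mulmxBr opprB.
Qed.

(* Writing v0 S - v0 = d - d A with d in Dinf, the vector x = v0 + d is fixed
   by S and Z + x is the limit of the powers of S. *)
Lemma semi_srk_succ_of_v0S S : extends W A S -> (v0 *m S - v0 <= Y)%MS ->
  semi_idempotent S /\ srk_is 1%:M S s.+1.
Proof.
move=> hS /submxP [a ha].
set d := a *m Dinf; set x := v0 + d.
have hdDinf : (d <= Dinf)%MS by rewrite submxMl.
have hdW := submx_trans hdDinf Dinf_subW.
have hxS : x *m S = x.
  have hv0S : v0 *m S = v0 + d - d *m A.
    by rewrite -[v0 *m S](subrK v0) ha /Y !mulmxBr mulmx1 mulmxA -/d addrC addrA.
  by rewrite /x mulmxDl hv0S (extends_mulmx hS hdW) subrK.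
have hxZ : ~~ (x <= Z)%MS.
  have hxc : x *m c = 1%:M by rewrite mulmxDl hv0c mulmx_kerc // addr0.
  apply: contra (notin_W_of_functional hxc) => hx.
  exact: submx_trans hx (submx_trans (Dinf_expA_sub J) Dinf_subW).
set U := (Dinf + x)%MS.
have hUS : (U *m S <= U)%MS by rewrite addsmxMr addsmxS ?Dinf_mulS ?hxS.
have hk1 : (S ^+ k.-1 <= U)%MS.
  apply: (exp_sub_of_orbit hS (addsmxSl _ _) hUS) => l _.
  rewrite addnC exprD -mulmxE mulmxA orbit_expS // -/v0.
  rewrite (_ : v0 = x - d); last by rewrite /x addrK.
  rewrite mulmxBl mulmx_exp_fix // addrC.
  apply: addmx_sub_adds => //.
  by rewrite -mulNmx Dinf_expS_sub // -mulNmx submxMl.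
have [[a' b'] /= e] := sub_addsmxP hk1.
have hSt t : (J <= t)%N -> S ^+ (k.-1 + t) = a' *m Z + b' *m x.
  move=> ht; rewrite exprD -mulmxE e mulmxDl -!mulmxA.
  by rewrite Dinf_expS_eq // mulmx_exp_fix.
split.
  apply/semi_idempotentP; exists (k.-1 + J)%N.
  rewrite hSt // mulmxDl -[a' *m Z *m S]mulmxA -[b' *m x *m S]mulmxA.
  by rewrite Z_mulS // hxS.
apply/srk_is_fullP; exists (k.-1 + J)%N => t ht.
have -> : \rank (S ^+ t) = \rank (Z + x)%MS.
  apply/eqmx_rank/andP; split.
    rewrite -(subnKC (_ : k.-1 <= t)%N); last by lia.
    by rewrite hSt; [apply: addmx_sub_adds; apply: submxMl | lia].
  rewrite addsmx_sub -(mulmx_exp_fix hxS t) submxMl andbT.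
  by rewrite -(Dinf_expS_eq hS (_ : J <= t)%N) ?submxMl //; lia.
by rewrite mxrank_adds_rV hxZ hJs addn1.
Qed.

Lemma semi_srk_succ_iff S : extends W A S ->
  (semi_idempotent S /\ srk_is 1%:M S s.+1) <-> (v0 *m S - v0 <= Y)%MS.
Proof.
move=> hS; split; last exact: semi_srk_succ_of_v0S.
by case=> hsemi; exact: v0S_sub_v0_in_Y.
Qed.

Lemma Dinf_sub_expA_sub_Y j : (Dinf *m (1%:M - A ^+ j) <= Y)%MS.
Proof.
elim: j => [|j IH]; first by rewrite subrr mulmx0 sub0mx.
have -> : 1%:M - A ^+ j.+1 = (1%:M - A ^+ j) + A ^+ j *m (1%:M - A).
  by rewrite mulmxBr mulmx1 exprSr -mulmxE addrA subrK.
rewrite (mulmxDr Dinf); apply: addmx_sub => //.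
by rewrite mulmxA submxMr ?Dinf_expA_sub.
Qed.

Lemma Dinf_eq_Z_adds_Y : (Dinf :=: Z + Y)%MS.
Proof.
apply/eqmxP/andP; split.
  rewrite -[X in (X <= _)%MS]mulmx1 -[1%:M](subrK (A ^+ J)) mulmxDr addrC.
  exact: addmx_sub_adds (submx_refl _) (Dinf_sub_expA_sub_Y J).
rewrite addsmx_sub (Dinf_expA_sub J) /Y mulmxBr mulmx1 /=.
by apply: addmx_sub => //; rewrite eqmx_opp Dinf_mulA.
Qed.

Lemma Z_cap_Y (t : 'rV[F]_n) : (t <= Z)%MS -> (t <= Y)%MS -> t = 0.
Proof.
move=> /submxP [a ha] /submxP [b hb].
have htA : t *m A = t by rewrite ha -mulmxA hJ.
rewrite -(mulmx_exp_fix htA J).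
have -> : t *m A ^+ J = b *m Dinf *m A ^+ J - b *m Dinf *m A ^+ J.+1.
  by rewrite hb /Y !mulmxA mulmxBr mulmx1 mulmxBl exprS -mulmxE !mulmxA.
by rewrite -!mulmxA -(addn1 J) Dinf_expA_fix subrr.
Qed.

Lemma card_extensions_srk_succ (Q : pred 'rV[F]_n) :
  (forall z u, (z <= Z)%MS -> Q (z + u) = Q u) ->
  (forall u, Q (u + v0) = Q u) ->
  #|[set u | `[< semi_idempotent (extension u) /\ srk_is 1%:M (extension u) s >]
             && Q u]| =
  (#|F| ^ s * #|[set u | `[< semi_idempotent (extension u) /\
                   srk_is 1%:M (extension u) s.+1 >] && Q u]|)%N.
Proof.
move=> hQZ hQv0.
have -> : [set u | `[< semi_idempotent (extension u) /\
    srk_is 1%:M (extension u) s >] && Q u] = [set u | (u <= Z + Y)%MS && Q u].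
  apply/setP => u; rewrite !inE -Dinf_eq_Z_adds_Y.
  by rewrite (propext (semi_srk_iff (extension_extends u))) v0_extension asboolb.
have -> : [set u | `[< semi_idempotent (extension u) /\
    srk_is 1%:M (extension u) s.+1 >] && Q u] = [set u | (u - v0 <= Y)%MS && Q u].
  apply/setP => u; rewrite !inE.
  by rewrite (propext (semi_srk_succ_iff (extension_extends u))) v0_extension asboolb.
by rewrite card_adds_direct ?hJs ?card_translate //; exact: Z_cap_Y.
Qed.

End FixedPart.

(* J can be taken positive, so that Z lies in Dinf A and hence in R. *)
Lemma card_srk_succ s (R : 'M[F]_n) (P : pred 'M[F]_n) :
  srk_is W A s -> (Dinf *m A <= R)%MS -> (v0 <= R)%MS ->
  (forall z u, (z <= R)%MS -> P (extension (z + u)) = P (extension u)) ->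
  #|[set S | `[< semi_idempotent S /\ extends W A S /\ srk_is 1%:M S s >]
             && P S]| =
  (#|F| ^ s * #|[set S | `[< semi_idempotent S /\ extends W A S /\
                   srk_is 1%:M S s.+1 >] && P S]|)%N.
Proof.
move=> hs hDR hv0R hP; rewrite !card_extensions.
have [[J hJ] | hnone] := pselect (exists J, Dinf *m A ^+ J *m A = Dinf *m A ^+ J).
  have [N hN] := mxrank_Dinf_expA hs.
  have eJ : Dinf *m A ^+ (N + J).+1 = Dinf *m A ^+ J.
    by rewrite -addSn addnC (Dinf_expA_fix hJ).
  have hJ' : Dinf *m A ^+ (N + J).+1 *m A = Dinf *m A ^+ (N + J).+1.
    by rewrite eJ.
  apply: (card_extensions_srk_succ hJ' (hN _ _)) => [|z u hz|u]; first lia.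
    apply: hP; apply: submx_trans hz (submx_trans _ hDR).
    by rewrite exprSr -mulmxE mulmxA submxMr ?Dinf_expA_sub.
  by rewrite addrC hP.
suff no_semi j : [set u | `[< semi_idempotent (extension u) /\
    srk_is 1%:M (extension u) j >] && P (extension u)] = set0.
  by rewrite !no_semi cards0 muln0.
apply/setP => u; rewrite !inE; apply/negbTE/negP => /andP [/asboolP [hsemi _] _].
exact/hnone/(Dinf_fix_of_semi (extension_extends u) hsemi).
Qed.

Lemma e2_srk_succ s : srk_is W A s -> e2 W A s = (#|F| ^ s * e2 W A s.+1)%N.
Proof.
move=> hs.
have e2E j : e2 W A j = #|[set S | `[< semi_idempotent S /\ extends W A S /\
    srk_is 1%:M S j >] && predT S]|.
  by apply: eq_card => S; rewrite !inE andbT.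
by rewrite !e2E; apply: (card_srk_succ (R := 1%:M)); rewrite ?submx1.
Qed.

Lemma e3_srk_succ s i : srk_is W A s -> ~~ (W *m A <= W)%MS ->
  e3 W A i s = (#|F| ^ s * e3 W A i s.+1)%N.
Proof.
move=> hs hWA.
have e3E j : e3 W A i j = #|[set S | `[< semi_idempotent S /\ extends W A S /\
    srk_is 1%:M S j >] && (\rank S == i)]|.
  apply: eq_card => S; rewrite !inE; apply/asboolP/andP.
    by case=> hsemi [hS [/eqP hr hj]]; split => //; apply/asboolP.
  by case=> /asboolP [hsemi [hS hj]] /eqP.
rewrite !e3E; apply: (card_srk_succ (R := W *m A)).
- exact: hs.
- exact: submxMr Dinf_subW.
- exact: v0_in_imW.
- by move=> z u hz; rewrite !mxrank_extension sub_addmxl.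
Qed.

End Functional.
End Orbit.
End Extensions.

Theorem lemma3p3 (F : finFieldType) (n : nat) (W A : 'M[F]_n)
    (hW : (\rank W).+1 = n) (s : nat) (hs : srk_is W A s) :
  e2 W A s = (#|F| ^ s * e2 W A s.+1)%N /\
  (~~ (W *m A <= W)%MS ->
     e3 W A (\rank (W *m A)) s = (#|F| ^ s * e3 W A (\rank (W *m A)) s.+1)%N /\
     e3 W A (\rank (W *m A)).+1 s = (#|F| ^ s * e3 W A (\rank (W *m A)).+1 s.+1)%N).
Proof.
have [y [hy hyDinf]] := pdom_pred_notin A hW.
have [c [hWc hv0c]] := functional_v0 hW hy hyDinf.
split; first exact (e2_srk_succ hW hy hyDinf hWc hv0c hs).
by move=> hWA; split; exact (e3_srk_succ hW hy hyDinf hWc hv0c _ hs hWA).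
Qed.
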